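(* Let $x,y,z$ be positive integers and let $p$ be a prime with $p\ge 3$ and $p\notin\{3,5\}$. If $\gcd(x,y)=1$ and $x^{p}+y^{p}=z^{p}$, then there exist positive integers $a,b,c$ such that $\gcd(a,b)=1$ and $a^{p}-4b^{p}=c^{2}$. *)

From mathcomp Require Import all_boot.

From mathcomp Require Import all_boot.

(* Take a = z^2, b = xy and c = |x^p - y^p|: squaring z^p = x^p + y^p gives
   (z^2)^p = 4 (xy)^p + (x^p - y^p)^2.  Coprimality of x and y propagates to
   z and each of x, y, hence to z^2 and xy; and c > 0 because x = y would force
   x = y = 1 and z^p = 2. *)

Lemma coprime_pow_sum_l {n x y z} :
  0 < n -> coprime x y -> x ^ n + y ^ n = z ^ n -> coprime z x.
Proof.
move=> n_gt0 cxy sum_n.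
have dvd_zx : gcdn z x %| y ^ n.
  by rewrite -(dvdn_addr _ (dvdn_exp n_gt0 (dvdn_gcdr z x))) sum_n
             (dvdn_exp n_gt0 (dvdn_gcdl z x)).
have cop_y : coprime (gcdn z x) (y ^ n).
  by rewrite coprimeXr // (coprime_dvdl (dvdn_gcdr z x) cxy).
by move: (coprime_dvdr dvd_zx cop_y); rewrite /coprime gcdnn.
Qed.

Lemma sqrnD_addsub m n : n <= m -> (m + n) ^ 2 = 4 * (m * n) + (m - n) ^ 2.
Proof. by move=> le_nm; rewrite -(sqrnD_sub le_nm) subnKC // nat_AGM2. Qed.

Lemma sqr_pow_sum n u v :
  v <= u -> (u ^ n + v ^ n) ^ 2 = 4 * (u * v) ^ n + (u ^ n - v ^ n) ^ 2.
Proof.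
move=> le_vu; have [-> | n_gt0] := posnP n; first by rewrite !expn0.
by rewrite expnMn sqrnD_addsub // leq_exp2r.
Qed.

Lemma pow_sum_neq {n x y z} :
  1 < n -> coprime x y -> x ^ n + y ^ n = z ^ n -> x != y.
Proof.
move=> n_gt1 cxy sum_n; apply/eqP=> exy; move: cxy sum_n.
rewrite exy /coprime gcdnn => /eqP ->; rewrite exp1n.
have [z_le1 | z_gt1] := leqP z 1.
  by case: z z_le1 => [|[|]] //; rewrite ?exp1n ?exp0n // ltnW.
move=> two_eq; have : 2 ^ 2 <= z ^ n.
  apply: (leq_trans (leq_pexp2l _ n_gt1)) => //.
  by rewrite leq_exp2r // ltnW.
by rewrite -two_eq.
Qed.

Theorem theorem1 (x y z p : nat) :
  0 < x -> 0 < y -> 0 < z ->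
  prime p -> 3 <= p -> p != 3 -> p != 5 ->
  coprime x y ->
  x ^ p + y ^ p = z ^ p ->
  exists a b c : nat,
    [/\ 0 < a, 0 < b, 0 < c, coprime a b & a ^ p = 4 * b ^ p + c ^ 2].
Proof.
move=> x_gt0 y_gt0 z_gt0 _ p_ge3 _ _ cxy sum_p.
have p_gt0 : 0 < p by apply: leq_trans p_ge3.
wlog le_yx : x y x_gt0 y_gt0 cxy sum_p / y <= x.
  move=> hwlog; have [le_yx | /ltnW le_xy] := leqP y x.
    exact: hwlog le_yx.
  by apply: (hwlog y x) le_xy; rewrite // (coprime_sym, addnC).
have czx : coprime z x := coprime_pow_sum_l p_gt0 cxy sum_p.
have czy : coprime z y.
  by rewrite coprime_sym in cxy; rewrite addnC in sum_p;
     apply: coprime_pow_sum_l sum_p.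
exists (z ^ 2), (x * y), (x ^ p - y ^ p); split.
- by rewrite expn_gt0 z_gt0.
- by rewrite muln_gt0 x_gt0 y_gt0.
- rewrite subn_gt0 ltn_exp2r // ltn_neqAle le_yx andbT eq_sym.
  by apply: (pow_sum_neq _ cxy sum_p); apply: leq_trans p_ge3.
- by rewrite coprimeXl // coprimeMr czx czy.
- by rewrite -expnM mulnC expnM -sum_p sqr_pow_sum.
Qed.
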